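(* (1) Treegrams need not be join-irreducible in $\mathbf{Cliqgm}(X)$: for $X=\{x,y,z\}$ there is a treegram over $X$ which equals the join in $\mathbf{Cliqgm}(X)$ of three cliquegrams each different from it. (2) Treegrams are join-dense in $\mathbf{Cliqgm}(X)$: for every finite set $X$, every cliquegram over $X$ is the join in $\mathbf{Cliqgm}(X)$ (computed pointwise in $\mathbf{Cliq}(X)$) of finitely many treegrams over $X$.
   Context: A clique-set of $X$ is a set $\mathcal{C}$ of nonempty subsets of $X$ such that (i) no member is contained in another, and (ii) for every nonempty $Y\subset X$, if every pair $y,y'\in Y$ (possibly equal) lies in some member of $\mathcal{C}$, then $Y$ lies in some member of $\mathcal{C}$. $\mathbf{Cliq}(X)$ is ordered by $\mathcal{C}\leq\mathcal{C}'$ iff every member of $\mathcal{C}$ is contained in a member of $\mathcal{C}'$; the join of clique-sets is the set of maximal cliques of the union of their graphs (vertices = union of members, edges = pairs of distinct elements lying in a common member). A cliquegram over $X$ is a map $C_X:\mathbb{R}\to\mathbf{Cliq}(X)$ that is monotone, equals $\{X\}$ for all large $t$ and $\emptyset$ for all small $t$, and is constant on $(-\infty,a_1)$, on each $[a_i,a_{i+1})$ and on $[a_n,\infty)$ for some reals $a_1<\dots<a_n$; $\mathbf{Cliqgm}(X)$ is the lattice of cliquegrams with pointwise order and operations. A treegram over $X$ is a cliquegram $C_X$ such that each $C_X(t)$ is a subpartition of $X$ (pairwise disjoint members). Join-irreducible: not the bottom element and not equal to a join of two elements both different from it. *)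

From HB Require Import structures.
From mathcomp Require Import all_boot all_order all_algebra.
From mathcomp Require Import reals.
Set Implicit Arguments. Unset Strict Implicit. Unset Printing Implicit Defensive.
Import Order.TTheory GRing.Theory Num.Theory.
Local Open Scope ring_scope.

Section Cliques.
Variable X : finType.

Definition is_cliqueset (C : {set {set X}}) : Prop :=
  [/\ (forall A, A \in C -> A != set0),
      (forall A B, A \in C -> B \in C -> A \subset B -> A = B) &
      (forall Y : {set X}, Y != set0 ->
         (forall y y', y \in Y -> y' \in Y -> exists2 A, A \in C & (y \in A) && (y' \in A)) ->
         exists2 A, A \in C & Y \subset A)].

Definition cliq_le (C C' : {set {set X}}) : Prop :=
  forall A, A \in C -> exists2 B, B \in C' & A \subset B.

(* join of two clique-sets: maximal cliques of the union of their graphs *)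
Definition cverts (C C' : {set {set X}}) : {set X} :=
  \bigcup_(A in C :|: C') A.

Definition cadj (C C' : {set {set X}}) (u v : X) : bool :=
  (u != v) && [exists A in C :|: C', (u \in A) && (v \in A)].

Definition is_gclique (C C' : {set {set X}}) (Y : {set X}) : bool :=
  (Y \subset cverts C C') &&
  [forall u in Y, forall v in Y, (u != v) ==> cadj C C' u v].

Definition cjoin (C C' : {set {set X}}) : {set {set X}} :=
  [set Y : {set X} | (Y != set0) && is_gclique C C' Y &&
     [forall Z : {set X}, (is_gclique C C' Z && (Y \subset Z)) ==> (Z == Y)]].

Definition is_subpartition (C : {set {set X}}) : Prop :=
  forall A B, A \in C -> B \in C -> A != B -> [disjoint A & B].

End Cliques.

Section Cliquegrams.
Variables (R : realType) (X : finType).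

Definition is_cliquegram (C : R -> {set {set X}}) : Prop :=
  [/\ (forall t, is_cliqueset (C t)),
      (forall s t, s <= t -> cliq_le (C s) (C t)),
      (exists T : R, forall t, T <= t -> C t = [set [set: X]]),
      (exists T : R, forall t, t <= T -> C t = set0) &
      (exists a : seq R,
         [/\ (0 < size a)%N, sorted <%R a,
             (forall s t, s < a`_0 -> t < a`_0 -> C s = C t),
             (forall i : nat, (i.+1 < size a)%N -> forall s t,
                 a`_i <= s < a`_i.+1 -> a`_i <= t < a`_i.+1 -> C s = C t) &
             (forall s t, a`_(size a).-1 <= s -> a`_(size a).-1 <= t -> C s = C t)])].

Definition is_treegram (C : R -> {set {set X}}) : Prop :=
  is_cliquegram C /\ forall t, is_subpartition (C t).

End Cliquegrams.

From HB Require Import structures.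
From mathcomp Require Import all_boot all_order all_algebra.
From mathcomp Require Import reals lra.
Import Order.TTheory GRing.Theory Num.Theory.
Local Open Scope ring_scope.
Set Implicit Arguments. Unset Strict Implicit. Unset Printing Implicit Defensive.

(* A family D of subsets of X determines its "covering relation"
   [covered D u v] (u and v lie in a common member of D).  The join of two
   clique-sets is, by definition, the set [maxcliques] of maximal cliques of
   the union of their graphs, and a clique-set D is recovered as the maximal
   cliques of its own covering relation.  Hence a clique-set D equals the join
   of C and C' as soon as [covered D = covered C || covered C'] (lemma
   [cjoin_eq]); all joins in the theorem are computed this way.
   (1) For X = {0,1,2}, the "pulse" cliquegram which is {X} on [0,1) is a
       treegram, and it is the join of the three pulses carrying the edges
       {0,1}, {1,2}, {0,2}: the triangle has the same covering relation as X.
   (2) For a cliquegram C and a set A, [restrict A (C t)] keeps only the block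
       A when A lies in a member of C t (and is {X}, resp. empty, when C t is);
       it is a treegram, each restriction is covered by C, and restricting to
       every member of C t recovers its covering relation, so C is the join of
       the restrictions of C to all subsets of X. *)

Section CoveringRelation.
Variable X : finType.
Implicit Types (C D : {set {set X}}) (A B Y Z : {set X}) (u v : X) (P : rel X).

Definition covered D u v : bool := [exists A in D, (u \in A) && (v \in A)].

Definition clique_of P Y : bool := [forall u in Y, forall v in Y, P u v].

Definition maxcliques P : {set {set X}} :=
  [set Y | (Y != set0) && clique_of P Y &&
     [forall Z : {set X}, (clique_of P Z && (Y \subset Z)) ==> (Z == Y)]].

Lemma clique_ofP P Y :
  clique_of P Y -> forall y y', y \in Y -> y' \in Y -> P y y'.
Proof.
move/forallP=> cY y y' yY y'Y; move: (cY y); rewrite yY /= => /forallP/(_ y').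
by rewrite y'Y.
Qed.

Lemma eq_clique_of P Q Y : P =2 Q -> clique_of P Y = clique_of Q Y.
Proof.
move=> PQ; apply: eq_forallb => u; congr (_ ==> _).
by apply: eq_forallb => v; rewrite PQ.
Qed.

Lemma eq_maxcliques P Q : P =2 Q -> maxcliques P = maxcliques Q.
Proof.
move=> PQ; apply/setP => Y; rewrite !inE (eq_clique_of Y PQ); congr (_ && _).
by apply: eq_forallb => Z; rewrite (eq_clique_of Z PQ).
Qed.

(* The cliques of the joined graph are the cliques of the covering relation
   (the loops of [covered] account for the vertex set of the graph). *)
Lemma is_gcliqueE C C' Y : is_gclique C C' Y = clique_of (covered (C :|: C')) Y.
Proof.
apply/andP/forallP.
  case=> /subsetP sYV /forallP adjY u; apply/implyP => uY; apply/forallP => v.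
  apply/implyP => vY; have [<-|uv] := eqVneq u v.
    have /bigcupP[A AinC uA] := sYV u uY.
    by apply/existsP; exists A; rewrite AinC uA.
  by move: (adjY u); rewrite uY /= => /forallP/(_ v); rewrite vY uv => /andP[].
move=> cY; split.
  apply/subsetP => u uY; move: (cY u); rewrite uY /= => /forallP/(_ u).
  rewrite uY /= => /existsP[A /andP[AinC /andP[uA _]]].
  by apply/bigcupP; exists A.
apply/forallP => u; apply/implyP => uY; apply/forallP => v; apply/implyP => vY.
apply/implyP => uv; rewrite /cadj uv /=.
by move: (cY u); rewrite uY /= => /forallP/(_ v); rewrite vY.
Qed.

Lemma cjoinE C C' : cjoin C C' = maxcliques (covered (C :|: C')).
Proof.
apply/setP => Y; rewrite !inE is_gcliqueE; congr (_ && _).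
by apply: eq_forallb => Z; rewrite is_gcliqueE.
Qed.

Lemma covered_refl_sym D u v :
  covered D u v -> [&& covered D u u, covered D v v & covered D v u].
Proof.
case/existsP=> A /andP[AD /andP[uA vA]].
by apply/and3P; split; apply/existsP; exists A; rewrite AD ?uA ?vA.
Qed.

Lemma coveredU C D u v : covered (C :|: D) u v = covered C u v || covered D u v.
Proof.
apply/existsP/orP => [[A /andP[]]|].
  by rewrite inE => /orP[] AinC uvA; [left|right]; apply/existsP; exists A;
    rewrite AinC uvA.
by case=> /existsP[A /andP[AinC uvA]]; exists A; rewrite inE AinC ?orbT uvA.
Qed.

Lemma covered1 A u v : covered [set A] u v = (u \in A) && (v \in A).
Proof.
apply/existsP/idP => [[B /andP[/set1P -> //]]|uvA].
by exists A; rewrite set11 uvA.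
Qed.

Lemma covered0 u v : covered set0 u v = false.
Proof. by apply/existsP => -[B]; rewrite inE. Qed.

(* Every related pair {u, v} extends to a maximal clique, so the maximal
   cliques of a reflexive-on-its-support symmetric relation cover it. *)
Lemma covered_maxcliques P :
  (forall u v, P u v -> [&& P u u, P v v & P v u]) ->
  covered (maxcliques P) =2 P.
Proof.
move=> Pok u v; apply/existsP/idP => [[Y /andP[]]|Puv].
  by rewrite inE => /andP[/andP[_ cY] _] /andP[uY vY]; exact: (clique_ofP cY).
have c_uv : clique_of P [set u; v].
  case/and3P: (Pok _ _ Puv) => Puu Pvv Pvu.
  apply/forallP => a; apply/implyP; rewrite !inE => /orP[]/eqP->;
  apply/forallP => b; apply/implyP; rewrite !inE => /orP[]/eqP-> //.
have [Y /maxsetP[cY maxY] /subsetP sub] := maxset_exists c_uv.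
have uY : u \in Y by rewrite sub // set21.
have vY : v \in Y by rewrite sub // set22.
exists Y; rewrite uY vY inE cY !andbT; apply/andP; split.
  by apply/set0Pn; exists u.
by apply/forallP => Z; apply/implyP => /andP[cZ sYZ]; apply/eqP; exact: maxY.
Qed.

Lemma covered_cjoin C C' u v :
  covered (cjoin C C') u v = covered C u v || covered C' u v.
Proof. by rewrite cjoinE covered_maxcliques ?coveredU //; exact: covered_refl_sym. Qed.

Lemma clique_of_mem C A : A \in C -> clique_of (covered C) A.
Proof.
move=> AinC; apply/forallP => u; apply/implyP => uA; apply/forallP => v.
by apply/implyP => vA; apply/existsP; exists A; rewrite AinC uA vA.
Qed.

Lemma maxcliques_covered C : is_cliqueset C -> maxcliques (covered C) = C.
Proof.
case=> C_ne C_anti C_closed.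
have in_member Z : Z != set0 -> clique_of (covered C) Z ->
    exists2 B, B \in C & Z \subset B.
  move=> Zne cZ; apply: (C_closed Z Zne) => y y' yZ y'Z.
  by case/existsP: (clique_ofP cZ yZ y'Z) => A /andP[AinC yy'A]; exists A.
apply/setP => Y; rewrite inE; apply/idP/idP.
  case/andP => /andP[Yne cY] /forallP maxY.
  have [B BinC sYB] := in_member Y Yne cY.
  by have := maxY B; rewrite clique_of_mem // sYB /= => /eqP <-.
move=> YC; rewrite C_ne // clique_of_mem //=; apply/forallP => Z.
apply/implyP => /andP[cZ sYZ].
have Zne : Z != set0.
  case/set0Pn: (C_ne _ YC) => y yY; apply/set0Pn; exists y; exact: subsetP sYZ _ yY.
have [B BinC sZB] := in_member Z Zne cZ.
have YB : Y = B by apply: C_anti => //; exact: subset_trans sYZ sZB.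
by rewrite eqEsubset sYZ andbT YB.
Qed.

Lemma cjoin_eq C C' D : is_cliqueset D ->
  (forall u v, covered D u v = covered C u v || covered C' u v) ->
  D = cjoin C C'.
Proof.
move=> cD DCC'; rewrite cjoinE -{1}(maxcliques_covered cD).
by apply: eq_maxcliques => u v; rewrite coveredU DCC'.
Qed.

Lemma cliqueset0 : is_cliqueset (set0 : {set {set X}}).
Proof.
split=> [A|A B|Y]; rewrite ?inE //.
by case/set0Pn => y yY /(_ y y yY yY)[A]; rewrite inE.
Qed.

Lemma cliqueset1 A : A != set0 -> is_cliqueset [set A].
Proof.
move=> Ane; split=> [B /set1P -> //|B B' /set1P -> /set1P -> //|Y _ cY].
exists A; first exact: set11.
by apply/subsetP => y yY; case: (cY y y yY yY) => B /set1P -> /andP[].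
Qed.

Lemma cliqueset_full (x0 : X) : is_cliqueset [set [set: X]].
Proof. by apply: cliqueset1; apply/set0Pn; exists x0. Qed.

Lemma subpartition0 : is_subpartition (set0 : {set {set X}}).
Proof. by move=> A B; rewrite inE. Qed.

Lemma subpartition1 A : is_subpartition [set A].
Proof. by move=> B B' /set1P -> /set1P ->; rewrite eqxx. Qed.

Lemma cliq_le_refl D : cliq_le D D.
Proof. by move=> Z ZD; exists Z; rewrite ?subxx. Qed.

Lemma cliq_le_top D : cliq_le D [set [set: X]].
Proof. by move=> Z _; exists [set: X]; [exact: set11|exact: subsetT]. Qed.

Lemma cliq_le_bot D : cliq_le set0 D.
Proof. by move=> Z; rewrite inE. Qed.

Lemma cliq_le_topE D : is_cliqueset D -> cliq_le [set [set: X]] D ->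
  D = [set [set: X]].
Proof.
case=> _ D_anti _ le; have [B BD sTB] := le [set: X] (set11 _).
have eB : B = [set: X] by apply/eqP; rewrite eqEsubset subsetT sTB.
apply/setP => Z; rewrite inE; apply/idP/eqP => [ZD|->]; last by rewrite -eB.
by rewrite -eB; apply: D_anti ZD BD _; rewrite eB subsetT.
Qed.

Definition restrict A D : {set {set X}} :=
  if D == [set [set: X]] then [set [set: X]]
  else if [exists B in D, (A != set0) && (A \subset B)] then [set A] else set0.

Lemma restrict0 A : restrict A set0 = set0.
Proof.
rewrite /restrict; case: eqP => [E|_].
  by have := set11 [set: X]; rewrite -E inE.
by case: existsP => // -[B]; rewrite inE.
Qed.

Lemma restrictT A : restrict A [set [set: X]] = [set [set: X]].
Proof. by rewrite /restrict eqxx. Qed.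

Lemma restrict_cliqueset A D : is_cliqueset D -> is_cliqueset (restrict A D).
Proof.
rewrite /restrict; case: eqP => [<- //|_] _.
by case: existsP => [[B /andP[_ /andP[Ane _]]]|_]; [exact: cliqueset1|exact: cliqueset0].
Qed.

Lemma restrict_subpartition A D : is_subpartition (restrict A D).
Proof.
rewrite /restrict; case: eqP => _; first exact: subpartition1.
by case: existsP => _; [exact: subpartition1|exact: subpartition0].
Qed.

Lemma restrict_le A D D' :
  cliq_le D D' -> is_cliqueset D' -> cliq_le (restrict A D) (restrict A D').
Proof.
move=> le cD'; rewrite /restrict.
have [_|D'T] := eqVneq D' [set [set: X]]; first exact: cliq_le_top.
have [DT|_] := eqVneq D [set [set: X]].
  by move: le; rewrite DT => /(cliq_le_topE cD') DT'; rewrite DT' eqxx in D'T.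
case: existsP => [[B /andP[BD /andP[Ane sAB]]]|_]; last exact: cliq_le_bot.
have [B' B'D' sBB'] := le B BD.
case: existsP => [_|[]]; first exact: cliq_le_refl.
by exists B'; rewrite B'D' Ane (subset_trans sAB sBB').
Qed.

Lemma covered_restrict A D u v : covered (restrict A D) u v -> covered D u v.
Proof.
rewrite /restrict; case: eqP => [-> //|_].
case: existsP => [[B /andP[BD /andP[_ sAB]]]|_]; last by rewrite covered0.
rewrite covered1 => /andP[uA vA]; apply/existsP; exists B.
by rewrite BD (subsetP sAB _ uA) (subsetP sAB _ vA).
Qed.

Lemma restrict_covers B D u v : is_cliqueset D -> B \in D -> u \in B -> v \in B ->
  covered (restrict B D) u v.
Proof.
move=> [D_ne _ _] BD uB vB; rewrite /restrict; case: eqP => [E|_].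
  by rewrite -E; apply/existsP; exists B; rewrite BD uB vB.
case: existsP => [_|[]]; last by exists B; rewrite BD D_ne // subxx.
by rewrite covered1 uB vB.
Qed.

End CoveringRelation.

Section Cliquegrams.
Variable R : realType.

(* Restricting a cliquegram pointwise to a fixed set gives a treegram: the
   same critical values witness its step-function shape. *)
Lemma restrict_treegram (X : finType) (C : R -> {set {set X}}) A :
  is_cliquegram C -> is_treegram (fun t => restrict A (C t)).
Proof.
case=> C_cs C_mon [T1 CT1] [T0 CT0] [a [a_ne a_sorted a_first a_mid a_last]].
split=> [|t]; last exact: restrict_subpartition.
split.
- by move=> t; exact: restrict_cliqueset.
- by move=> s t st; apply: restrict_le; [exact: C_mon|exact: C_cs].
- by exists T1 => t /CT1 ->; exact: restrictT.
- by exists T0 => t /CT0 ->; exact: restrict0.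
- exists a; split=> // [s t hs ht|i hi s t hs ht|s t hs ht];
    by rewrite ?(a_first s t hs ht) ?(a_mid i hi s t hs ht) ?(a_last s t hs ht).
Qed.

Lemma covered_foldr_join (X : finType) (T0 : R -> {set {set X}}) s t u v :
  covered (foldr (fun T acc => cjoin (T t) acc) (T0 t) s) u v =
  covered (T0 t) u v || has (fun T => covered (T t) u v) s.
Proof.
elim: s => [|T s IH] /=; first by rewrite orbF.
by rewrite covered_cjoin IH orbCA.
Qed.

Lemma foldr_join_eq (X : finType) (T0 : R -> {set {set X}}) s t D :
  is_cliqueset D -> (0 < size s)%N ->
  (forall u v, covered D u v = covered (T0 t) u v || has (fun T => covered (T t) u v) s) ->
  D = foldr (fun T acc => cjoin (T t) acc) (T0 t) s.
Proof.
case: s => [//|T s] cD _ DTs /=; apply: cjoin_eq => // u v.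
by rewrite DTs covered_foldr_join /= orbCA.
Qed.

End Cliquegrams.

Lemma covered_by_restrictions (X : finType) (D : {set {set X}}) u v :
  is_cliqueset D ->
  covered D u v =
  covered (restrict [set: X] D) u v ||
  has (fun A => covered (restrict A D) u v) (enum {set X}).
Proof.
move=> cD; apply/idP/idP => [/existsP[B /andP[BinD /andP[uB vB]]]|].
  rewrite orbC; apply/orP; left; apply/hasP; exists B; first exact: mem_enum.
  exact: restrict_covers.
case/orP => [/covered_restrict //|]; by case/hasP => B _ /covered_restrict.
Qed.

Section Pulses.
Variable R : realType.

Definition pulse (X : finType) (D : {set {set X}}) (t : R) : {set {set X}} :=
  if t < 0 then set0 else if t < 1 then D else [set [set: X]].

Lemma pulse_cliquegram (X : finType) (x0 : X) (D : {set {set X}}) :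
  is_cliqueset D -> is_cliquegram (pulse D).
Proof.
move=> cD; rewrite /pulse; split.
- move=> t; case: ifP => _; first exact: cliqueset0.
  by case: ifP => _; [|exact: cliqueset_full].
- move=> s t st; case: (ltP s 0) => s0; first exact: cliq_le_bot.
  case: (ltP t 0) => t0; first by exfalso; lra.
  case: (ltP t 1) => t1; last exact: cliq_le_top.
  by case: (ltP s 1) => s1; [exact: cliq_le_refl|exfalso; lra].
- exists 1 => t t1.
  by case: (ltP t 0) => t0; [|case: (ltP t 1) => t1' //]; exfalso; lra.
- by exists (-1) => t t1; case: (ltP t 0) => t0 //; exfalso; lra.
- exists [:: 0; 1]; split=> //=; first by rewrite andbT ltr01.
  + by move=> s t -> ->.
  + move=> [|i] //= _ s t /andP[s0 ->] /andP[t0 ->].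
    by case: (ltP s 0) => ?; [exfalso; lra|case: (ltP t 0) => ?; [exfalso; lra|]].
  + move=> s t s1 t1; case: (ltP s 0) => ?; first (exfalso; lra).
    case: (ltP t 0) => ?; first (exfalso; lra).
    by case: (ltP s 1) => ?; [exfalso; lra|case: (ltP t 1) => ?; [exfalso; lra|]].
Qed.

Lemma pulse_subpartition (X : finType) (D : {set {set X}}) t :
  is_subpartition D -> is_subpartition (pulse D t).
Proof.
move=> spD; rewrite /pulse.
by case: ifP => _; [exact: subpartition0|case: ifP => _ //; exact: subpartition1].
Qed.

Lemma pulse_inj (X : finType) (D D' : {set {set X}}) : pulse D = pulse D' -> D = D'.
Proof. by move/(congr1 (fun F => F 0)); rewrite /pulse ltxx ltr01. Qed.

End Pulses.

Lemma pair_neq_full (X : finType) (a b c : X) :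
  c != a -> c != b -> [set [set a; b]] <> [set [set: X]].
Proof.
move=> ca cb /set1_inj E.
by have := in_setT c; rewrite -E !inE (negPf ca) (negPf cb).
Qed.

Definition o0 : 'I_3 := @Ordinal 3 0 isT.
Definition o1 : 'I_3 := @Ordinal 3 1 isT.
Definition o2 : 'I_3 := @Ordinal 3 2 isT.

(* The full triangle on {0,1,2} has the same covering relation as its three
   edges, so the pulse of {X} is the join of the three edge pulses. *)
Lemma pulse_triangle (R : realType) (t : R) :
  pulse [set [set: 'I_3]] t =
  cjoin (cjoin (pulse [set [set o0; o1]] t) (pulse [set [set o1; o2]] t))
        (pulse [set [set o0; o2]] t).
Proof.
have [cs _ _ _ _] := pulse_cliquegram R o0 (cliqueset_full o0).
apply: cjoin_eq => // u v; rewrite covered_cjoin /pulse.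
case: ifP => _; first by rewrite !covered0.
case: ifP => _; rewrite !covered1 !inE //.
by case: u => [[|[|[|m]]] hu]; case: v => [[|[|[|n]]] hv].
Qed.

Theorem mainTheorem6 (R : realType) :
  (exists (T C1 C2 C3 : R -> {set {set 'I_3}}),
      [/\ is_treegram T,
          [/\ is_cliquegram C1, is_cliquegram C2 & is_cliquegram C3],
          [/\ C1 <> T, C2 <> T & C3 <> T] &
          forall t, T t = cjoin (cjoin (C1 t) (C2 t)) (C3 t)])
  /\
  (forall (X : finType) (C : R -> {set {set X}}), is_cliquegram C ->
     exists (T0 : R -> {set {set X}}) (s : seq (R -> {set {set X}})),
       [/\ is_treegram T0, (forall i, (i < size s)%N -> is_treegram (nth T0 s i)) &
           forall t, C t = foldr (fun T acc => cjoin (T t) acc) (T0 t) s]).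
Proof.
have edge_cs (a b : 'I_3) : is_cliqueset [set [set a; b]].
  by apply: cliqueset1; apply/set0Pn; exists a; rewrite !inE eqxx.
split.
  exists (pulse [set [set: 'I_3]]), (pulse [set [set o0; o1]]),
    (pulse [set [set o1; o2]]), (pulse [set [set o0; o2]]).
  split; last exact: pulse_triangle.
  - split=> [|t]; first exact: (pulse_cliquegram _ o0 (cliqueset_full o0)).
    by apply: pulse_subpartition; exact: subpartition1.
  - by split; exact: (pulse_cliquegram _ o0) (edge_cs _ _).
  - by split=> /pulse_inj; [apply: (@pair_neq_full _ _ _ o2)|
      apply: (@pair_neq_full _ _ _ o0)|apply: (@pair_neq_full _ _ _ o1)].
move=> X C cgC; have [C_cs _ _ _ _] := cgC.
exists (fun t => restrict [set: X] (C t)),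
       (map (fun A t => restrict A (C t)) (enum {set X})).
split=> [|i|t]; first exact: restrict_treegram.
  by rewrite size_map => ilt; rewrite (nth_map set0) //; exact: restrict_treegram.
apply: (foldr_join_eq (T0 := fun t => restrict [set: X] (C t))) => [||u v].
- exact: C_cs.
- by rewrite size_map -cardT; apply/card_gt0P; exists set0.
- by rewrite has_map; exact: covered_by_restrictions.
Qed.
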